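(* Consider the parking problem on the infinite square grid in the model described in the context. Suppose the initial configuration $C(0)$ belongs to the class $\mathcal I_{223}$, i.e.: the set of parking nodes (with their capacities) is symmetric with respect to a unique line of symmetry $l$, the configuration $C(0)$ itself is symmetric with respect to $l$, no robot lies on a node of $l$, and at least one parking node lies on $l$. If the capacity of a parking node lying on $l$ is an odd integer, then the parking problem is unsolvable from $C(0)$.
   Context: The deployment region is the infinite square grid $G=P\times P$, where $P$ is the infinite path on $\mathbb Z$, embedded in the plane. A finite set $\mathcal P=\{p_1,\dots,p_m\}$ of distinct grid nodes are parking nodes; each $p_i$ has a capacity $k_i\ge 1$ known to all robots (maximum number of robots it may accommodate). There are $n=\sum_i k_i$ robots initially at pairwise distinct nodes. Robots are anonymous, autonomous, identical, homogeneous (same deterministic algorithm), oblivious, silent, disoriented (no common coordinate axes, no common chirality), have global visibility and global-strong multiplicity detection (they see the exact number of robots at every node). They act in Look-Compute-Move cycles under a fair asynchronous scheduler; a move goes to one of the four neighbours (or stays) and is instantaneous. The configuration $C(t)$ is given by $\lambda(v)$, the number of robots at node $v$ at time $t$, and $\mu(v)$, the capacity of $v$ if $v$ is a parking node and $0$ otherwise. A grid automorphism $\phi$ is a symmetry of the configuration if $\lambda(\phi(v))=\lambda(v)$ and $\mu(\phi(v))=\mu(v)$ for all $v$, and a symmetry of the parking nodes if $\mu(\phi(v))=\mu(v)$ for all $v$ (so symmetric parking nodes have equal capacities). Symmetries are reflections (about horizontal, vertical or diagonal axes through nodes or edge midpoints) and rotations (by $90^\circ$ or $180^\circ$). The parking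 problem: reach in finite time a configuration where every $p_i$ holds exactly $k_i$ robots, all robots are stationary, and any robot performing a Look decides not to move. It is unsolvable from $C(0)$ if no deterministic distributed algorithm guarantees this from $C(0)$ under all admissible schedules. *)

From mathcomp Require Import all_boot all_algebra.
Set Implicit Arguments. Unset Strict Implicit. Unset Printing Implicit Defensive.
Import GRing.Theory Num.Theory.
Local Open Scope ring_scope.

Definition node := (int * int)%type.
Definition vadd (a b : node) : node := (a.1 + b.1, a.2 + b.2).

(** Linear part of a grid automorphism: an element of the dihedral group D4,
    (x,y) |-> optionally swap coordinates, then optionally negate each. *)
Record lin := Lin { swp : bool; negx : bool; negy : bool }.
Definition lin_app (f : lin) (v : node) : node :=
  let ab := if swp f then (v.2, v.1) else v in
  (if negx f then - ab.1 else ab.1, if negy f then - ab.2 else ab.2).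
(** determinant -1 (orientation reversing) *)
Definition lin_rev (f : lin) : bool := swp f (+) negx f (+) negy f.

(** Grid automorphisms: v |-> g v + c (these are all automorphisms of P x P). *)
Record gaut := Gaut { glin : lin; gtr : node }.
Definition gapp (phi : gaut) (v : node) : node := vadd (lin_app (glin phi) v) (gtr phi).

(** Reflections about an axis (horizontal, vertical, diagonal; through nodes or
    edge midpoints): orientation reversing involutive automorphisms.
    The nodes lying on the axis are exactly the fixed nodes. *)
Definition is_reflection (phi : gaut) : Prop :=
  lin_rev (glin phi) /\ forall v, gapp phi (gapp phi v) = v.
Definition on_axis (phi : gaut) (v : node) : Prop := gapp phi v = v.

(** Configurations: n robots (indexed by 'I_n) at positions [pos];
    mu v = capacity of v if v is a parking node, 0 otherwise. *)
Definition lambda n (pos : 'I_n -> node) (v : node) : nat := #|[pred i | pos i == v]|.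

Definition sym_parking (mu : node -> nat) (phi : gaut) : Prop :=
  forall v, mu (gapp phi v) = mu v.
Definition sym_config n (mu : node -> nat) (pos : 'I_n -> node) (phi : gaut) : Prop :=
  sym_parking mu phi /\ forall v, lambda pos (gapp phi v) = lambda pos v.

Definition parking_instance n (mu : node -> nat) : Prop :=
  exists s : seq node, uniq s /\ (forall v, (0 < mu v)%N = (v \in s)) /\
     n = (\sum_(v <- s) mu v)%N.

(** A view: the snapshot (multiplicity, capacity) of every node, expressed in the
    local coordinate system of the observing robot (origin = its position). *)
Definition view := node -> (nat * nat).
Inductive dir := Stay | Up | Down | Left | Right.
Definition dir_off (d : dir) : node :=
  match d with
  | Stay => (0, 0) | Up => (0, 1) | Down => (0, -1) | Left => (-1, 0) | Right => (1, 0)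
  end.
(** A deterministic algorithm (same for all robots, oblivious):
    map from current view to a move in local coordinates. *)
Definition algorithm := view -> dir.

Definition view_of n (mu : node -> nat) (pos : 'I_n -> node) (f : lin) (v : node) : view :=
  fun w => let u := vadd v (lin_app f w) in (lambda pos u, mu u).

(** Execution state: positions and pending destination (Some target after a
    Look/Compute whose Move has not yet been performed). *)
Definition state n := (('I_n -> node) * ('I_n -> option node))%type.

(** One time step: activated robots that are idle perform Look+Compute on the
    current configuration; activated robots with a pending move perform Move. *)
Definition step n (A : algorithm) (mu : node -> nat) (F : 'I_n -> lin)
    (st : state n) (act : 'I_n -> bool) : state n :=
  let pos := st.1 in let pend := st.2 in
  (fun i => if act i then (if pend i is Some w then w else pos i) else pos i,
   fun i => if act i then
              (if pend i is Some _ then None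
               else Some (vadd (pos i) (lin_app (F i) (dir_off (A (view_of mu pos (F i) (pos i)))))))
            else pend i).

Fixpoint exec n (A : algorithm) (mu : node -> nat) (F : 'I_n -> lin)
    (pos0 : 'I_n -> node) (sched : nat -> 'I_n -> bool) (t : nat) : state n :=
  match t with
  | 0 => (pos0, fun _ => None)
  | t'.+1 => step A mu F (exec A mu F pos0 sched t') (sched t')
  end.

Definition fair n (sched : nat -> 'I_n -> bool) : Prop :=
  forall (i : 'I_n) (t : nat), exists t', (t <= t')%N /\ sched t' i.

Definition solved n (A : algorithm) (mu : node -> nat) (F : 'I_n -> lin) (st : state n) : Prop :=
  (forall v, lambda st.1 v = mu v) /\
  (forall i, st.2 i = None \/ st.2 i = Some (st.1 i)) /\
  (forall i, A (view_of mu st.1 (F i) (st.1 i)) = Stay).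

(** A solves the problem from (mu, pos0): for every choice of local frames
    (disorientation) and every fair asynchronous schedule, a solved state is reached. *)
Definition solves n (A : algorithm) (mu : node -> nat) (pos0 : 'I_n -> node) : Prop :=
  forall (F : 'I_n -> lin) (sched : nat -> 'I_n -> bool), fair sched ->
    exists T, solved A mu F (exec A mu F pos0 sched T).

Definition unsolvable n (mu : node -> nat) (pos0 : 'I_n -> node) : Prop :=
  ~ exists A : algorithm, solves A mu pos0.

From mathcomp Require Import all_boot all_algebra.
From mathcomp Require Import zify.
From Stdlib Require Import FunctionalExtensionality.

Set Implicit Arguments.
Unset Strict Implicit.
Unset Printing Implicit Defensive.

(* The adversary pairs every robot i with the robot sg i standing at its mirror
   image, gives sg i the mirrored local frame, and activates all robots at every
   step.  Mirrored robots then see identical views, so they compute mirrored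
   moves and the whole execution stays symmetric about the axis.  Since no robot
   starts on the axis, sg has no fixed point, and the robots standing on any
   axis node come in pairs: their number is always even and can never equal the
   odd capacity of the parking node on the axis. *)

Lemma card_preim_involutive (T : finType) (sg : T -> T) (A : {pred T}) :
  involutive sg -> #|[preim sg of A]| = #|A|.
Proof.
move=> sgK; rewrite -(card_image (inv_inj sgK)); apply: eq_card => x.
by rewrite -[x in RHS]sgK mem_image ?inE //; exact: inv_inj.
Qed.

Lemma odd_card_involution (T : finType) (sg : T -> T) (A : {pred T}) :
  involutive sg -> (forall x, sg x != x) -> (forall x, (sg x \in A) = (x \in A)) ->
  ~~ odd #|A|.
Proof.
move=> sgK sg_fpf A_sg.
pose B := [pred x | enum_rank x < enum_rank (sg x)].
have DB : [predD A & B] =i [preim sg of [predI A & B]].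
  move=> x; rewrite !inE A_sg sgK andbC; case: (x \in A) => //=.
  by have := sg_fpf x; case: ltngtP => // /val_inj/enum_rank_inj <-; rewrite eqxx.
by rewrite -(cardID B) (eq_card DB) card_preim_involutive // addnn odd_double.
Qed.

Lemma lin_app_id (w : node) : lin_app (Lin false false false) w = w.
Proof. by case: w. Qed.

Lemma lin_app_vadd (f : lin) (a b : node) :
  lin_app f (vadd a b) = vadd (lin_app f a) (lin_app f b).
Proof.
case: f => [[] [] []]; case: a => a1 a2; case: b => b1 b2;
rewrite /lin_app /vadd /=; f_equal; lia.
Qed.

Lemma gapp_vadd (rho : gaut) (p q : node) :
  gapp rho (vadd p q) = vadd (gapp rho p) (lin_app (glin rho) q).
Proof.
rewrite /gapp lin_app_vadd; case: (lin_app _ p) => a b; case: (lin_app _ q) => c d;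
case: (gtr rho) => e f; rewrite /vadd /=; f_equal; lia.
Qed.

Lemma lin_involutive (rho : gaut) :
  involutive (gapp rho) -> involutive (lin_app (glin rho)).
Proof.
case: rho => [[s x y] [c1 c2]] rhoK [w1 w2].
move: (rhoK (Posz 0, Posz 0)) (rhoK (w1, w2)); clear rhoK.
by case: s; case: x; case: y; rewrite /gapp /lin_app /vadd /= => H0 Hw;
  case: H0 => *; case: Hw => *; f_equal; lia.
Qed.

Lemma exists_mirror_involution (n : nat) (pos : 'I_n -> node) (f : node -> node) :
  injective pos -> involutive f -> (forall v, lambda pos (f v) = lambda pos v) ->
  exists sg : 'I_n -> 'I_n, involutive sg /\ forall i, pos (sg i) = f (pos i).
Proof.
move=> pos_inj fK lambda_f.
have /fin_all_exists [sg pos_sg] : forall i, exists j, pos j = f (pos i).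
  move=> i; have : 0 < lambda pos (f (pos i)).
    by rewrite lambda_f; apply/card_gt0P; exists i; rewrite inE.
  by case/card_gt0P=> j; rewrite inE => /eqP; exists j.
by exists sg; split=> // i; apply: pos_inj; rewrite !pos_sg fK.
Qed.

Lemma exists_mirrored_frames (n : nat) (sg : 'I_n -> 'I_n) (L : lin) :
  involutive sg -> (forall i, sg i != i) -> involutive (lin_app L) ->
  exists F : 'I_n -> lin, forall i w, lin_app (F (sg i)) w = lin_app L (lin_app (F i) w).
Proof.
move=> sgK sg_fpf LK.
exists (fun i : 'I_n => if i < sg i then Lin false false false else L) => i w.
rewrite sgK; have := sg_fpf i.
by case: ltngtP => [_ _|_ _|/val_inj -> /eqP//]; rewrite lin_app_id ?LK.
Qed.

Lemma fair_synchronous (n : nat) : fair (fun (_ : nat) (_ : 'I_n) => true).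
Proof. by move=> i t; exists t. Qed.

Section Mirror.

Variables (n : nat) (rho : gaut) (sg : 'I_n -> 'I_n).
Hypotheses (rhoK : involutive (gapp rho)) (sgK : involutive sg).

Definition mirrored_pos (pos : 'I_n -> node) : Prop :=
  forall i, pos (sg i) = gapp rho (pos i).

Definition mirrored (st : state n) : Prop :=
  mirrored_pos st.1 /\ forall i, st.2 (sg i) = omap (gapp rho) (st.2 i).

Lemma lambda_mirror (pos : 'I_n -> node) :
  mirrored_pos pos -> forall u, lambda pos (gapp rho u) = lambda pos u.
Proof.
move=> pos_sg u; rewrite /lambda -(card_preim_involutive _ sgK); apply: eq_card => i.
by rewrite !inE pos_sg (inj_eq (can_inj rhoK)).
Qed.

Lemma lambda_axis_even (pos : 'I_n -> node) (v : node) :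
  (forall i, sg i != i) -> mirrored_pos pos -> on_axis rho v -> ~~ odd (lambda pos v).
Proof.
move=> sg_fpf pos_sg v_axis; apply: odd_card_involution sgK sg_fpf _ => i.
by rewrite !inE pos_sg -{1}v_axis (inj_eq (can_inj rhoK)).
Qed.

Variables (A : algorithm) (mu : node -> nat) (F : 'I_n -> lin).
Hypotheses (mu_sym : sym_parking mu rho)
  (F_sg : forall i w, lin_app (F (sg i)) w = lin_app (glin rho) (lin_app (F i) w)).

Lemma view_of_mirror (pos : 'I_n -> node) (i : 'I_n) :
  mirrored_pos pos -> view_of mu pos (F (sg i)) (pos (sg i)) = view_of mu pos (F i) (pos i).
Proof.
move=> pos_sg; apply: functional_extensionality => w.
by rewrite /view_of F_sg pos_sg -gapp_vadd lambda_mirror // mu_sym.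
Qed.

Lemma step_mirror (st : state n) (act : 'I_n -> bool) :
  (forall i, act (sg i) = act i) -> mirrored st -> mirrored (step A mu F st act).
Proof.
move=> act_sg [pos_sg pend_sg]; split=> i; rewrite /step /= act_sg pend_sg.
all: case: (act i); case: (st.2 i) => [w|] //=; try exact: pos_sg.
by rewrite view_of_mirror // F_sg pos_sg gapp_vadd.
Qed.

Lemma exec_mirror (pos0 : 'I_n -> node) (sched : nat -> 'I_n -> bool) :
  mirrored_pos pos0 -> (forall t i, sched t (sg i) = sched t i) ->
  forall t, mirrored (exec A mu F pos0 sched t).
Proof.
move=> pos0_sg sched_sg; elim=> [|t IH]; first by split.
exact: step_mirror.
Qed.

End Mirror.

Theorem lemma3 (n : nat) (mu : node -> nat) (pos0 : 'I_n -> node) (rho : gaut) :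
  parking_instance n mu ->
  injective pos0 ->
  is_reflection rho ->
  sym_parking mu rho ->
  (forall rho' : gaut, is_reflection rho' -> sym_parking mu rho' ->
     forall v, gapp rho' v = gapp rho v) ->
  sym_config mu pos0 rho ->
  (forall i, ~ on_axis rho (pos0 i)) ->
  (exists v, on_axis rho v /\ (0 < mu v)%N) ->
  (exists v, on_axis rho v /\ (0 < mu v)%N /\ odd (mu v)) ->
  unsolvable mu pos0.
Proof.
move=> _ pos0_inj [_ rhoK] mu_sym _ [_ lambda_sym] off_axis _
  [v [v_axis [_ odd_mu]]] [A solves_A].
have [sg [sgK pos0_sg]] := exists_mirror_involution pos0_inj rhoK lambda_sym.
have sg_fpf : forall i, sg i != i.
  by move=> i; apply/eqP=> sg_i; apply: (off_axis i); rewrite /on_axis -pos0_sg sg_i.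
have [F F_sg] := exists_mirrored_frames sgK sg_fpf (lin_involutive rhoK).
have [T [lambda_mu _]] := solves_A F _ (@fair_synchronous n).
have [pos_sg _] : mirrored rho sg (exec A mu F pos0 (fun _ _ => true) T).
  exact: exec_mirror.
by have := lambda_axis_even rhoK sgK sg_fpf pos_sg v_axis; rewrite lambda_mu odd_mu.
Qed.
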